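(* Let $L\ge1$ and $K\ge L$ be integers. (i) Assume $\alpha\in(\alpha_{L+1},\alpha_L)$. There is a constant $c(K)>0$ depending only on $\alpha$ and $K$ such that: if $(l_0,\dots,l_{K+2})$ satisfies $(E_K)$ and $l_1,\dots,l_{K+2}\ge0$, then $d_0\ge c(K)$; and if moreover $l_{K+2}=0$, then $d_{K+1}\le-c(K)$. (ii) Assume $\alpha\in(\alpha_{L+1},\alpha_L]$. If $(l_0,\dots,l_{K+2})$ satisfies $(E_K)$, then $$l_{L+2}-\alpha l_{L+1}=-\frac{\sin(\frac{L+2}{2}\omega)}{\sin(\frac{L}{2}\omega)}\,l_1+2\alpha\,\frac{\cos(\frac{\omega}{2})\sin(\frac{L+3}{2}\omega)}{\sin(\frac{L}{2}\omega)}\,l_{L+1}.$$ Moreover, if $\alpha\in(\alpha_{L+1},\alpha_L)$ and $l_1,\dots,l_{K+2}\ge0$, then $l_{L+2}-\alpha l_{L+1}<-c(K)$ (for a positive constant $c(K)$ depending only on $\alpha,K$, which may be taken equal to the one in (i)).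
   Context: Define $\alpha_1:=+\infty$ and, for $L\ge2$, $\alpha_L:=\dfrac{1}{1+2\cos(\frac{2\pi}{L+2})}$. For $\alpha>1/3$, let $\omega\in(0,\pi)$ be the unique real with $\cos\omega=\frac{1-\alpha}{2\alpha}$. For an integer $K\ge0$ and a real vector $(l_0,\dots,l_{K+2})$, set $d_0:=l_0-l_1+\alpha l_2$, $d_j:=-\alpha l_{j-1}+l_j-l_{j+1}+\alpha l_{j+2}$ for $j\in\{1,\dots,K\}$, and $d_{K+1}:=-\alpha l_K+l_{K+1}-l_{K+2}$. The system $(E_K)$ is: $d_1=\dots=d_K=0$, $l_0=0$, and $\sum_{j=1}^{K+1}l_j=1$. *)

From Stdlib Require Import Reals Lra Lia.
Open Scope R_scope.

(* alpha_L for L >= 2.  alpha_1 = +infinity is handled in the interval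
   predicates below (the value of alpha_ 1 itself is never used). *)
Definition alpha_ (L : nat) : R := 1 / (1 + 2 * cos (2 * PI / INR (L + 2))).

Definition lt_alpha (L : nat) (a : R) : Prop := (L <= 1)%nat \/ a < alpha_ L.
Definition le_alpha (L : nat) (a : R) : Prop := (L <= 1)%nat \/ a <= alpha_ L.

Definition in_open (L : nat) (a : R) : Prop := alpha_ (L + 1) < a /\ lt_alpha L a.
Definition in_half_open (L : nat) (a : R) : Prop := alpha_ (L + 1) < a /\ le_alpha L a.

(* omega: the unique real in (0, pi) with cos omega = (1 - a)/(2 a), for a > 1/3 *)
Definition omega (a : R) : R := acos ((1 - a) / (2 * a)).

(* the d_j's for a sequence l (indices beyond K+2 are irrelevant) *)
Definition d0 (a : R) (l : nat -> R) : R := l 0%nat - l 1%nat + a * l 2%nat.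
Definition dj (a : R) (l : nat -> R) (j : nat) : R :=
  - a * l (j - 1)%nat + l j - l (j + 1)%nat + a * l (j + 2)%nat.
Definition dlast (a : R) (K : nat) (l : nat -> R) : R :=
  - a * l K + l (K + 1)%nat - l (K + 2)%nat.

Definition E_sys (a : R) (K : nat) (l : nat -> R) : Prop :=
  (forall j : nat, (1 <= j <= K)%nat -> dj a l j = 0) /\
  l 0%nat = 0 /\
  sum_f_R0 (fun j => l (S j)) K = 1.

Definition nonneg_seq (K : nat) (l : nat -> R) : Prop :=
  forall j : nat, (1 <= j <= K + 2)%nat -> 0 <= l j.

(* The relations d_1 = ... = d_K = 0 form a third-order linear recurrence whose
   characteristic polynomial a X^3 - X^2 + X - a = (X - 1)(a X^2 + (a-1) X + a)
   has the roots 1 and exp(+- i omega), cos omega = (1 - a)/(2a).  Hence, with the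
   half angle s = omega/2, every solution with l_0 = 0 is of the form
       l_j = A (1 - cos (2 j s)) + C sin (2 j s)                  (closed form).
   Two linear identities between l_1, l_2, l_{L+1}, l_{L+2} hold on this
   two-dimensional space (checked on the closed form by trigonometry); the second
   one is part (ii).  The hypothesis alpha_{L+1} < a <= alpha_L places s in the
   window pi < (L+3) s, (L+2) s <= pi, which fixes the signs of the sines in these
   identities.  For nonnegative solutions this yields d_0 >= const * l_{L+1} and
   l_{L+2} - a l_{L+1} <= - const * l_{L+1}, and l_{L+1} is bounded below by
   combining the identities with the normalisation sum l_j = 1 and a crude
   exponential bound on solutions of the recurrence.  Finally d_{K+1} is d_0 of
   the reversed sequence, which again solves (E_K) when l_{K+2} = 0. *)

From Stdlib Require Import Reals Lra Lia Nsatz.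
Open Scope R_scope.

Lemma recurrence_step (a : R) (l : nat -> R) (n : nat) :
  a <> 0 -> dj a l (n + 1) = 0 ->
  l (n + 3)%nat = l n + (l (n + 2)%nat - l (n + 1)%nat) / a.
Proof.
  unfold dj. intros ha hd.
  replace (n + 1 - 1)%nat with n in hd by lia.
  replace (n + 1 + 1)%nat with (n + 2)%nat in hd by lia.
  replace (n + 1 + 2)%nat with (n + 3)%nat in hd by lia.
  apply (Rmult_eq_reg_l a); [|exact ha]. field_simplify; [lra|exact ha].
Qed.

Lemma recurrence_ind (K : nat) (P : nat -> Prop) :
  P 0%nat -> P 1%nat -> P 2%nat ->
  (forall n, (n + 3 <= K + 2)%nat ->
     P n -> P (n + 1)%nat -> P (n + 2)%nat -> P (n + 3)%nat) ->
  forall j, (j <= K + 2)%nat -> P j.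
Proof.
  intros P0 P1 P2 Pstep.
  assert (H : forall m j, (j <= m)%nat -> (j <= K + 2)%nat -> P j).
  { induction m as [|m IH]; intros j hjm hjK.
    - replace j with 0%nat by lia. exact P0.
    - destruct (Nat.le_gt_cases j m) as [hj|hj]; [now apply IH|].
      destruct j as [|[|[|n]]]; try assumption.
      replace (S (S (S n))) with (n + 3)%nat by lia.
      apply Pstep; [lia | apply IH; lia ..]. }
  intros j hj. exact (H j j (le_n j) hj).
Qed.

Lemma recurrence_unique (a : R) (K : nat) (l l' : nat -> R) :
  a <> 0 ->
  (forall j, (1 <= j <= K)%nat -> dj a l j = 0) ->
  (forall j, (1 <= j <= K)%nat -> dj a l' j = 0) ->
  l 0%nat = l' 0%nat -> l 1%nat = l' 1%nat -> l 2%nat = l' 2%nat ->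
  forall j, (j <= K + 2)%nat -> l j = l' j.
Proof.
  intros ha hl hl' e0 e1 e2.
  apply recurrence_ind; [exact e0 | exact e1 | exact e2 |].
  intros n hn IH0 IH1 IH2.
  rewrite (recurrence_step a l n ha (hl (n + 1)%nat ltac:(lia))),
          (recurrence_step a l' n ha (hl' (n + 1)%nat ltac:(lia))).
  now rewrite IH0, IH1, IH2.
Qed.

Lemma growth_bound (a : R) (K : nat) (l : nat -> R) :
  0 < a -> l 0%nat = 0 -> (forall j, (1 <= j <= K)%nat -> dj a l j = 0) ->
  forall j, (j <= K + 2)%nat ->
    Rabs (l j) <= (1 + 2 / a) ^ j * (Rabs (l 1%nat) + Rabs (l 2%nat)).
Proof.
  intros ha l0 hrec.
  set (G := 1 + 2 / a). set (N := Rabs (l 1%nat) + Rabs (l 2%nat)).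
  assert (hG : 1 <= G) by (unfold G; assert (0 < 2 / a) by (apply Rdiv_lt_0_compat; lra); lra).
  assert (hN1 : Rabs (l 1%nat) <= N) by (unfold N; pose proof (Rabs_pos (l 2%nat)); lra).
  assert (hN2 : Rabs (l 2%nat) <= N) by (unfold N; pose proof (Rabs_pos (l 1%nat)); lra).
  assert (hN : 0 <= N) by (pose proof (Rabs_pos (l 1%nat)); lra).
  assert (mono : forall i j, (i <= j)%nat -> G ^ i * N <= G ^ j * N).
  { intros i j hij. apply Rmult_le_compat_r; [exact hN|]. apply Rle_pow; assumption. }
  apply recurrence_ind.
  - rewrite l0, Rabs_R0. simpl. lra.
  - pose proof (mono 0%nat 1%nat ltac:(lia)). simpl in *. lra.
  - pose proof (mono 0%nat 2%nat ltac:(lia)). simpl pow in *. lra.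
  - intros n hn IH0 IH1 IH2.
    rewrite (recurrence_step a l n ltac:(lra) (hrec (n + 1)%nat ltac:(lia))).
    pose proof (mono n (n + 2)%nat ltac:(lia)).
    pose proof (mono (n + 1)%nat (n + 2)%nat ltac:(lia)).
    assert (hdiff : Rabs ((l (n + 2)%nat - l (n + 1)%nat) / a)
                    <= 2 * (G ^ (n + 2) * N) / a).
    { unfold Rdiv. rewrite Rabs_mult, Rabs_inv, (Rabs_right a) by lra.
      apply Rmult_le_compat_r; [left; apply Rinv_0_lt_compat; lra|].
      eapply Rle_trans; [apply Rabs_triang|]. rewrite Rabs_Ropp. lra. }
    replace (G ^ (n + 3) * N) with (G ^ (n + 2) * N + 2 * (G ^ (n + 2) * N) / a)
      by (replace (n + 3)%nat with (S (n + 2)) by lia; simpl; unfold G; field; lra).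
    eapply Rle_trans; [apply Rabs_triang|]. lra.
Qed.

Definition growth_const (a : R) (K : nat) : R := INR (S K) * (1 + 2 / a) ^ (K + 2).

(* The normalisation l_1 + ... + l_{K+1} = 1 keeps (l_1, l_2) away from zero. *)
Lemma normalization_bound (a : R) (K : nat) (l : nat -> R) :
  0 < a -> E_sys a K l -> 1 <= growth_const a K * (Rabs (l 1%nat) + Rabs (l 2%nat)).
Proof.
  intros ha [hrec [l0 hsum]].
  set (G := 1 + 2 / a). set (N := Rabs (l 1%nat) + Rabs (l 2%nat)).
  assert (hG : 1 <= G) by (unfold G; assert (0 < 2 / a) by (apply Rdiv_lt_0_compat; lra); lra).
  assert (hN : 0 <= N)
    by (unfold N; pose proof (Rabs_pos (l 1%nat)); pose proof (Rabs_pos (l 2%nat)); lra).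
  rewrite <- hsum. unfold growth_const. fold G N.
  replace (INR (S K) * G ^ (K + 2) * N) with ((G ^ (K + 2) * N) * INR (S K)) by ring.
  rewrite <- sum_cte. apply sum_Rle. intros j hj.
  eapply Rle_trans; [apply Rle_abs|].
  eapply Rle_trans; [apply (growth_bound a K l ha l0 hrec); lia|].
  apply Rmult_le_compat_r; [exact hN|]. apply Rle_pow; [exact hG | lia].
Qed.

(* Proves a polynomial identity in sin/cos of two angles X, s, after expanding
   all sums and double angles; the Pythagorean relations are the only side facts. *)
Ltac trig_nsatz X s :=
  repeat (rewrite cos_plus || rewrite sin_plus || rewrite cos_minus || rewrite sin_minus
          || rewrite cos_2a || rewrite sin_2a);
  pose proof (sin2_cos2 s); pose proof (sin2_cos2 X); unfold Rsqr in *;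
  nsatz.

(* The general solution with l_0 = 0, in terms of the half angle s = omega/2. *)
Definition gsol (s A C : R) (j : nat) : R :=
  A * (1 - cos (2 * INR j * s)) + C * sin (2 * INR j * s).

Lemma gsol_recurrence (a s A C : R) (n : nat) :
  a * (1 + 2 * cos (2 * s)) = 1 -> dj a (gsol s A C) (n + 1) = 0.
Proof.
  intros h. rewrite cos_2a in h. unfold dj, gsol.
  replace (n + 1 - 1)%nat with n by lia.
  rewrite !plus_INR; simpl INR.
  set (X := (2 * INR n + 3) * s).
  replace (2 * INR n * s) with (X - (s + 2 * s)) by (unfold X; ring).
  replace (2 * (INR n + 1) * s) with (X - s) by (unfold X; ring).
  replace (2 * (INR n + 1 + 1) * s) with (X + s) by (unfold X; ring).
  replace (2 * (INR n + 1 + (1 + 1)) * s) with (X + (s + 2 * s)) by (unfold X; ring).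
  clearbody X. trig_nsatz X s.
Qed.

(* Identity behind part (i) for d_0 = -l_1 + a l_2 (with l_0 = 0). *)
Lemma gsol_identity_d0 (a s A C : R) (L : nat) :
  a * (1 + 2 * cos (2 * s)) = 1 ->
  sin (INR (L + 1) * s) * (- gsol s A C 1 + a * gsol s A C 2) =
    a * (sin (INR (L + 1) * s) * gsol s A C (L + 2)
         - sin (INR (L + 3) * s) * gsol s A C (L + 1)).
Proof.
  intros h. rewrite cos_2a in h. unfold gsol.
  rewrite !plus_INR; simpl INR.
  set (X := (INR L + 1) * s).
  replace (2 * (INR L + 1) * s) with (2 * X) by (unfold X; ring).
  replace (2 * (INR L + (1 + 1)) * s) with (2 * X + 2 * s) by (unfold X; ring).
  replace ((INR L + (1 + 1 + 1)) * s) with (X + 2 * s) by (unfold X; ring).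
  replace (2 * 1 * s) with (2 * s) by ring.
  replace (2 * (1 + 1) * s) with (2 * (2 * s)) by ring.
  clearbody X. trig_nsatz X s.
Qed.

(* The identity of part (ii), multiplied by sin (L s). *)
Lemma gsol_identity_q (a s A C : R) (L : nat) :
  a * (1 + 2 * cos (2 * s)) = 1 ->
  sin (INR L * s) * (gsol s A C (L + 2) - a * gsol s A C (L + 1)) =
    - sin (INR (L + 2) * s) * gsol s A C 1
    + 2 * a * cos s * sin (INR (L + 3) * s) * gsol s A C (L + 1).
Proof.
  intros h. rewrite cos_2a in h. unfold gsol.
  rewrite !plus_INR; simpl INR.
  set (X := INR L * s).
  replace (2 * (INR L + 1) * s) with (2 * X + 2 * s) by (unfold X; ring).
  replace (2 * (INR L + (1 + 1)) * s) with (2 * X + 2 * (2 * s)) by (unfold X; ring).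
  replace ((INR L + (1 + 1)) * s) with (X + 2 * s) by (unfold X; ring).
  replace ((INR L + (1 + 1 + 1)) * s) with (X + (s + 2 * s)) by (unfold X; ring).
  replace (2 * 1 * s) with (2 * s) by ring.
  clearbody X. trig_nsatz X s.
Qed.

(* gsol can match any prescribed l_1, l_2: the 2x2 determinant is
   -4 sin(s)^2 sin(2s). *)
Lemma gsol_interpolation (s y1 y2 : R) :
  sin (2 * s) <> 0 -> exists A C, gsol s A C 1 = y1 /\ gsol s A C 2 = y2.
Proof.
  intros h2.
  assert (hs : sin s <> 0) by (intro h; apply h2; rewrite sin_2a, h; ring).
  set (u1 := 1 - cos (2 * s)). set (v1 := sin (2 * s)).
  set (u2 := 1 - cos (2 * (2 * s))). set (v2 := sin (2 * (2 * s))).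
  assert (hdet : u1 * v2 - u2 * v1 = -4 * sin s * sin s * sin (2 * s)).
  { unfold u1, v1, u2, v2. trig_nsatz s s. }
  assert (hdet0 : u1 * v2 - u2 * v1 <> 0).
  { rewrite hdet. repeat apply Rmult_integral_contrapositive_currified; [lra | exact hs | exact hs | exact h2]. }
  exists ((y1 * v2 - y2 * v1) / (u1 * v2 - u2 * v1)),
         ((u1 * y2 - u2 * y1) / (u1 * v2 - u2 * v1)).
  unfold gsol. simpl INR.
  replace (2 * 1 * s) with (2 * s) by ring.
  replace (2 * (1 + 1) * s) with (2 * (2 * s)) by ring.
  fold u1 v1 u2 v2. split; field; exact hdet0.
Qed.

Lemma closed_form (a s : R) (K : nat) (l : nat -> R) :
  a * (1 + 2 * cos (2 * s)) = 1 -> sin (2 * s) <> 0 ->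
  l 0%nat = 0 -> (forall j, (1 <= j <= K)%nat -> dj a l j = 0) ->
  exists A C, forall j, (j <= K + 2)%nat -> l j = gsol s A C j.
Proof.
  intros h h2 l0 hrec.
  assert (ha : a <> 0) by (intro e; rewrite e in h; lra).
  destruct (gsol_interpolation s (l 1%nat) (l 2%nat) h2) as [A [C [e1 e2]]].
  exists A, C. apply (recurrence_unique a K); auto.
  - intros j hj. replace j with (j - 1 + 1)%nat by lia. now apply gsol_recurrence.
  - rewrite l0. unfold gsol. simpl INR. rewrite Rmult_0_r, Rmult_0_l, cos_0, sin_0. ring.
Qed.

(* The two identities transferred to an arbitrary solution (L <= K keeps the
   indices L+1, L+2 inside 0..K+2). *)
Lemma solution_identities (a s : R) (K L : nat) (l : nat -> R) :
  a * (1 + 2 * cos (2 * s)) = 1 -> sin (2 * s) <> 0 -> (L <= K)%nat ->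
  l 0%nat = 0 -> (forall j, (1 <= j <= K)%nat -> dj a l j = 0) ->
  sin (INR (L + 1) * s) * (- l 1%nat + a * l 2%nat) =
    a * (sin (INR (L + 1) * s) * l (L + 2)%nat - sin (INR (L + 3) * s) * l (L + 1)%nat) /\
  sin (INR L * s) * (l (L + 2)%nat - a * l (L + 1)%nat) =
    - sin (INR (L + 2) * s) * l 1%nat
    + 2 * a * cos s * sin (INR (L + 3) * s) * l (L + 1)%nat.
Proof.
  intros h h2 hLK l0 hrec.
  destruct (closed_form a s K l h h2 l0 hrec) as [A [C hAC]].
  rewrite !hAC by lia.
  split; [apply gsol_identity_d0 | apply gsol_identity_q]; exact h.
Qed.

(* S0..S3 stand for sin (L s), ..., sin ((L+3) s), cs for cos s, and M for the
   normalisation constant; x, y, z stand for l_1, l_{L+1}, l_{L+2}. *)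
Section Estimates.

Variables a S0 S1 S2 S3 cs M : R.
Hypotheses (ha : 0 < a) (hS0 : 0 < S0) (hS1 : 0 < S1) (hS2 : 0 < S2) (hS3 : S3 < 0)
  (hcs : 0 < cs) (hM : 0 < M).

(* d_0 >= slope_d0 * l_{L+1} and l_{L+2} - a l_{L+1} <= - slope_q * l_{L+1}. *)
Definition slope_d0 : R := a * (- S3 / S1).
Definition slope_q : R := - 2 * a * cs * S3 / S0.
(* l_1 <= ratio * l_{L+1}. *)
Definition ratio : R := a * S0 / S2.
(* The resulting lower bound for l_{L+1}, and the constant c(K) of the theorem. *)
Definition lower_y : R := 1 / (M * (ratio + ratio / a + a + - S3 / S1)).
Definition est_const : R := Rmin slope_d0 slope_q * lower_y / 2.

Lemma slope_d0_pos : 0 < slope_d0.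
Proof.
  unfold slope_d0. apply Rmult_lt_0_compat; [exact ha|].
  apply Rdiv_lt_0_compat; lra.
Qed.

Lemma slope_q_pos : 0 < slope_q.
Proof.
  unfold slope_q. apply Rdiv_lt_0_compat; [|exact hS0].
  replace (- 2 * a * cs * S3) with (2 * a * cs * - S3) by ring.
  repeat apply Rmult_lt_0_compat; lra.
Qed.

Lemma ratio_pos : 0 < ratio.
Proof. unfold ratio. apply Rdiv_lt_0_compat; [apply Rmult_lt_0_compat|]; assumption. Qed.

Lemma lower_y_pos : 0 < lower_y.
Proof.
  pose proof ratio_pos.
  assert (0 < ratio / a) by (apply Rdiv_lt_0_compat; assumption).
  assert (0 < - S3 / S1) by (apply Rdiv_lt_0_compat; lra).
  unfold lower_y. apply Rdiv_lt_0_compat; [lra|].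
  apply Rmult_lt_0_compat; lra.
Qed.

Lemma est_const_pos : 0 < est_const.
Proof.
  pose proof slope_d0_pos. pose proof slope_q_pos. pose proof lower_y_pos.
  unfold est_const. apply Rdiv_lt_0_compat; [|lra].
  apply Rmult_lt_0_compat; [apply Rmin_glb_lt|]; assumption.
Qed.

Variables x y z l2 : R.
Hypotheses (hx : 0 <= x) (hy : 0 <= y) (hz : 0 <= z).
Hypothesis ID : S1 * (- x + a * l2) = a * (S1 * z - S3 * y).
Hypothesis IQ : S0 * (z - a * y) = - S2 * x + 2 * a * cs * S3 * y.
Hypothesis normalized : 1 <= M * (x + l2).

Lemma d0_formula : - x + a * l2 = a * z + slope_d0 * y.
Proof. apply (Rmult_eq_reg_l S1); [|lra]. rewrite ID. unfold slope_d0. field. lra. Qed.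

Lemma q_upper : z - a * y <= - slope_q * y.
Proof.
  apply (Rmult_le_reg_l S0); [exact hS0|]. rewrite IQ. unfold slope_q.
  replace (S0 * (- (- 2 * a * cs * S3 / S0) * y)) with (2 * a * cs * S3 * y) by (field; lra).
  assert (0 <= S2 * x) by (apply Rmult_le_pos; lra). lra.
Qed.

Lemma x_upper : x <= ratio * y.
Proof.
  apply (Rmult_le_reg_l S2); [exact hS2|]. unfold ratio.
  replace (S2 * (a * S0 / S2 * y)) with (S0 * (a * y)) by (field; lra).
  assert (0 <= S0 * z) by (apply Rmult_le_pos; lra).
  assert (0 <= a * cs * - S3 * y) by (repeat apply Rmult_le_pos; lra).
  replace (S2 * x) with (S0 * (a * y) - S0 * z - 2 * (a * cs * - S3 * y))
    by (replace (S0 * (a * y) - S0 * z) with (- (S0 * (z - a * y))) by ring;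
        rewrite IQ; ring).
  lra.
Qed.

(* x + l_2 <= P y by the three relations above, and M (x + l_2) >= 1. *)
Lemma y_lower : lower_y <= y.
Proof.
  pose proof d0_formula as hd. pose proof q_upper as hq. pose proof x_upper as hxy.
  pose proof slope_q_pos.
  set (P := ratio + ratio / a + a + - S3 / S1).
  assert (hl2y : l2 = x / a + z + (- S3 / S1) * y).
  { apply (Rmult_eq_reg_l a); [|lra].
    replace (a * (x / a + z + - S3 / S1 * y)) with (x + (a * z + slope_d0 * y))
      by (unfold slope_d0; field; lra).
    rewrite <- hd. ring. }
  assert (hxa : x / a <= ratio / a * y).
  { unfold Rdiv. rewrite Rmult_assoc, (Rmult_comm (/ a)), <- Rmult_assoc.
    apply Rmult_le_compat_r; [left; apply Rinv_0_lt_compat|]; lra. }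
  assert (hza : z <= a * y) by nra.
  assert (hsum : x + l2 <= P * y) by (rewrite hl2y; unfold P; lra).
  assert (hP : 0 < M * P).
  { pose proof lower_y_pos as hly. unfold lower_y in hly. fold P in hly.
    apply Rinv_0_lt_compat in hly. unfold Rdiv in hly.
    rewrite Rmult_1_l, Rinv_inv in hly. exact hly. }
  unfold lower_y. fold P. apply (Rmult_le_reg_l (M * P)); [exact hP|].
  unfold Rdiv. rewrite Rmult_1_l, Rinv_r by lra.
  eapply Rle_trans; [exact normalized|].
  rewrite Rmult_assoc. apply Rmult_le_compat_l; lra.
Qed.

Lemma d0_lower : est_const <= - x + a * l2.
Proof.
  rewrite d0_formula. pose proof y_lower. pose proof lower_y_pos.
  pose proof (Rmin_l slope_d0 slope_q). pose proof (Rmin_glb_lt _ _ _ slope_d0_pos slope_q_pos).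
  assert (0 <= a * z) by (apply Rmult_le_pos; lra).
  assert (Rmin slope_d0 slope_q * lower_y <= slope_d0 * y) by (apply Rmult_le_compat; lra).
  assert (0 < Rmin slope_d0 slope_q * lower_y) by (apply Rmult_lt_0_compat; lra).
  unfold est_const. lra.
Qed.

Lemma q_lower : z - a * y < - est_const.
Proof.
  pose proof q_upper. pose proof y_lower. pose proof lower_y_pos.
  pose proof (Rmin_r slope_d0 slope_q). pose proof (Rmin_glb_lt _ _ _ slope_d0_pos slope_q_pos).
  assert (Rmin slope_d0 slope_q * lower_y <= slope_q * y) by (apply Rmult_le_compat; lra).
  assert (0 < Rmin slope_d0 slope_q * lower_y) by (apply Rmult_lt_0_compat; lra).
  unfold est_const. lra.
Qed.

End Estimates.

Lemma threshold_angle_range (m : nat) :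
  (2 <= m)%nat -> 0 < 2 * PI / INR (m + 2) <= PI / 2.
Proof.
  intros hm. pose proof PI_RGT_0.
  assert (hm4 : 4 <= INR (m + 2)) by (replace 4 with (INR 4) by (simpl; lra); apply le_INR; lia).
  split; [apply Rdiv_lt_0_compat; lra|].
  apply (Rmult_le_reg_r (INR (m + 2))); [lra|].
  unfold Rdiv. rewrite Rmult_assoc, Rinv_l by lra.
  assert (0 <= PI * (INR (m + 2) - 4)) by (apply Rmult_le_pos; lra). lra.
Qed.

Lemma threshold_compare (c a : R) : 0 <= c -> 0 < a ->
  (1 / (1 + 2 * c) < a -> (1 - a) / (2 * a) < c) /\
  (a < 1 / (1 + 2 * c) -> c < (1 - a) / (2 * a)) /\
  (a <= 1 / (1 + 2 * c) -> c <= (1 - a) / (2 * a)).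
Proof.
  intros hc ha.
  assert (hD : 1 / (1 + 2 * c) * (1 + 2 * c) = 1) by (field; lra).
  assert (hx : (1 - a) / (2 * a) * (2 * a) = 1 - a) by (field; lra).
  repeat split; intro h; nra.
Qed.

(* For a > 0 with (1 - a)/(2a) < 1, omega really is an angle with the prescribed
   cosine, and (1 - a)/(2a) > -1/2 forces omega < 2 pi/3. *)
Lemma omega_spec (a : R) : 0 < a -> (1 - a) / (2 * a) < 1 ->
  cos (omega a) = (1 - a) / (2 * a) /\ 0 < omega a < 2 * PI / 3.
Proof.
  intros ha hx1. pose proof PI_RGT_0.
  assert (hx2 : -1/2 < (1 - a) / (2 * a)).
  { replace ((1 - a) / (2 * a)) with (/ (2 * a) - 1/2) by (field; lra).
    assert (0 < / (2 * a)) by (apply Rinv_0_lt_compat; lra). lra. }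
  assert (hcos : cos (omega a) = (1 - a) / (2 * a)) by (apply cos_acos; lra).
  pose proof (acos_bound_lt ((1 - a) / (2 * a)) ltac:(lra)) as hb. fold (omega a) in hb.
  split; [exact hcos|split; [lra|]].
  replace (2 * PI / 3) with (2 * (PI / 3)) by field.
  apply cos_decreasing_0; try lra. rewrite cos_2PI3, hcos. lra.
Qed.

Lemma omega_above (L : nat) (a : R) : (1 <= L)%nat -> alpha_ (L + 1) < a ->
  0 < a /\ cos (omega a) = (1 - a) / (2 * a) /\ 0 < omega a < 2 * PI / 3 /\
  2 * PI / INR (L + 3) < omega a.
Proof.
  intros hL ha. unfold alpha_ in ha. replace (L + 1 + 2)%nat with (L + 3)%nat in ha by lia.
  pose proof (threshold_angle_range (L + 1) ltac:(lia)) as hth.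
  replace (L + 1 + 2)%nat with (L + 3)%nat in hth by lia.
  set (th := 2 * PI / INR (L + 3)) in *.
  assert (hc : 0 <= cos th) by (apply cos_ge_0; lra).
  assert (hc1 : cos th <= 1) by apply COS_bound.
  assert (hpos : 0 < a).
  { eapply Rlt_trans; [|exact ha]. apply Rdiv_lt_0_compat; lra. }
  destruct (threshold_compare (cos th) a hc hpos) as [hlt _].
  specialize (hlt ha).
  destruct (omega_spec a hpos ltac:(lra)) as [hcos hw].
  repeat split; try tauto.
  pose proof PI_RGT_0.
  apply cos_decreasing_0; lra.
Qed.

Lemma omega_below (L : nat) (a : R) : (1 <= L)%nat -> 0 < a ->
  cos (omega a) = (1 - a) / (2 * a) -> 0 < omega a < 2 * PI / 3 ->
  (lt_alpha L a -> omega a < 2 * PI / INR (L + 2)) /\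
  (le_alpha L a -> omega a <= 2 * PI / INR (L + 2)).
Proof.
  intros hL ha hcos hw. pose proof PI_RGT_0.
  destruct (Nat.eq_dec L 1) as [->|hL2].
  { replace (INR (1 + 2)) with 3 by (simpl; lra). split; intros; lra. }
  pose proof (threshold_angle_range L ltac:(lia)) as hth.
  set (th := 2 * PI / INR (L + 2)) in *.
  assert (hc : 0 <= cos th) by (apply cos_ge_0; lra).
  destruct (threshold_compare (cos th) a hc ha) as [_ [hlt hle]].
  unfold lt_alpha, le_alpha, alpha_. fold th.
  split; intros [h|h]; try lia.
  - assert (cos th < cos (omega a)) by (rewrite hcos; now apply hlt).
    apply cos_decreasing_0; lra.
  - destruct (Rle_lt_dec (omega a) th) as [hle'|hgt]; [exact hle'|].
    assert (cos (omega a) < cos th) by (apply cos_decreasing_1; lra).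
    specialize (hle h). lra.
Qed.

Lemma half_angle_lower (L : nat) (a : R) : (1 <= L)%nat -> alpha_ (L + 1) < a ->
  0 < a /\ a * (1 + 2 * cos (2 * (omega a / 2))) = 1 /\
  0 < omega a / 2 < PI / 3 /\ PI < INR (L + 3) * (omega a / 2).
Proof.
  intros hL ha.
  destruct (omega_above L a hL ha) as [hpos [hcos [hw hth]]].
  assert (hn : 0 < INR (L + 3)) by (apply lt_0_INR; lia).
  replace (2 * (omega a / 2)) with (omega a) by field.
  repeat split; try lra.
  - rewrite hcos. field. lra.
  - apply (Rmult_lt_compat_r (INR (L + 3) / 2)) in hth; [|lra].
    replace (2 * PI / INR (L + 3) * (INR (L + 3) / 2)) with PI in hth by (field; lra).
    lra.
Qed.

Lemma half_angle_upper (L : nat) (a : R) : (1 <= L)%nat -> alpha_ (L + 1) < a ->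
  (lt_alpha L a -> INR (L + 2) * (omega a / 2) < PI) /\
  (le_alpha L a -> INR (L + 2) * (omega a / 2) <= PI).
Proof.
  intros hL ha.
  destruct (omega_above L a hL ha) as [hpos [hcos [hw _]]].
  destruct (omega_below L a hL hpos hcos hw) as [hlt hle].
  assert (hn : 0 < INR (L + 2)) by (apply lt_0_INR; lia).
  replace (INR (L + 2) * (omega a / 2)) with (omega a * (INR (L + 2) / 2)) by field.
  assert (hPI : 2 * PI / INR (L + 2) * (INR (L + 2) / 2) = PI) by (field; lra).
  rewrite <- hPI. split; intro h.
  - apply Rmult_lt_compat_r; [lra | now apply hlt].
  - apply Rmult_le_compat_r; [lra | now apply hle].
Qed.

Lemma sine_signs (L : nat) (s : R) : (1 <= L)%nat -> 0 < s < PI / 3 ->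
  PI < INR (L + 3) * s -> INR (L + 2) * s <= PI ->
  0 < sin (INR L * s) /\ 0 < sin (INR (L + 1) * s) /\ sin (INR (L + 3) * s) < 0 /\
  0 < cos s /\ 0 < sin (2 * s).
Proof.
  intros hL hs h3 h2. pose proof PI_RGT_0.
  assert (hn : 1 <= INR L) by (replace 1 with (INR 1) by reflexivity; apply le_INR; exact hL).
  rewrite !plus_INR in *. simpl INR in *.
  assert (0 < INR L * s) by (apply Rmult_lt_0_compat; lra).
  repeat split.
  - apply sin_gt_0; nra.
  - apply sin_gt_0; nra.
  - apply sin_lt_0; nra.
  - apply cos_gt_0; lra.
  - apply sin_gt_0; lra.
Qed.

Lemma sum_f_R0_rev (f : nat -> R) (n : nat) :
  sum_f_R0 f n = sum_f_R0 (fun j => f (n - j)%nat) n.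
Proof.
  induction n as [|n IH]; [reflexivity|].
  rewrite (decomp_sum (fun j => f (S n - j)%nat) (S n)) by lia. simpl pred.
  replace (S n - 0)%nat with (S n) by lia.
  rewrite tech5, IH, Rplus_comm. reflexivity.
Qed.

(* j |-> l_{K+2-j}; it exchanges d_0 and -d_{K+1}. *)
Definition reversed (K : nat) (l : nat -> R) : nat -> R := fun j => l (K + 2 - j)%nat.

Lemma reversed_E_sys (a : R) (K : nat) (l : nat -> R) :
  E_sys a K l -> l (K + 2)%nat = 0 -> E_sys a K (reversed K l).
Proof.
  intros [hrec [l0 hsum]] hz. unfold reversed. split; [|split].
  - intros j hj. pose proof (hrec (K + 1 - j)%nat ltac:(lia)) as hr. unfold dj in *.
    replace (K + 1 - j - 1)%nat with (K + 2 - (j + 2))%nat in hr by lia.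
    replace (K + 1 - j + 1)%nat with (K + 2 - j)%nat in hr by lia.
    replace (K + 1 - j + 2)%nat with (K + 2 - (j - 1))%nat in hr by lia.
    replace (K + 1 - j)%nat with (K + 2 - (j + 1))%nat in hr by lia.
    lra.
  - now replace (K + 2 - 0)%nat with (K + 2)%nat by lia.
  - rewrite sum_f_R0_rev, <- hsum. apply sum_eq. intros j hj. f_equal. lia.
Qed.

Lemma reversed_nonneg (K : nat) (l : nat -> R) :
  nonneg_seq K l -> l 0%nat = 0 -> nonneg_seq K (reversed K l).
Proof.
  intros hN l0 j hj. unfold reversed.
  destruct (Nat.eq_dec j (K + 2)) as [->|hne].
  - rewrite Nat.sub_diag, l0. lra.
  - apply hN. lia.
Qed.

Lemma reversed_d0 (a : R) (K : nat) (l : nat -> R) :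
  d0 a (reversed K l) = - dlast a K l.
Proof.
  unfold d0, dlast, reversed.
  replace (K + 2 - 0)%nat with (K + 2)%nat by lia.
  replace (K + 2 - 1)%nat with (K + 1)%nat by lia.
  replace (K + 2 - 2)%nat with K by lia. ring.
Qed.

Lemma uniform_bounds (L K : nat) (a : R) : (1 <= L)%nat -> (L <= K)%nat -> in_open L a ->
  exists c : R, 0 < c /\
    forall l : nat -> R, E_sys a K l -> nonneg_seq K l ->
      c <= d0 a l /\ l (L + 2)%nat - a * l (L + 1)%nat < - c.
Proof.
  intros hL hK [hlow hup].
  destruct (half_angle_lower L a hL hlow) as [ha [hrel [hs h3]]].
  pose proof (proj1 (half_angle_upper L a hL hlow) hup) as h2.
  set (s := omega a / 2) in *.
  destruct (sine_signs L s hL hs h3 (Rlt_le _ _ h2)) as [hS0 [hS1 [hS3 [hcs hsin2]]]].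
  assert (hS2 : 0 < sin (INR (L + 2) * s)).
  { apply sin_gt_0; [|exact h2]. apply Rmult_lt_0_compat; [apply lt_0_INR; lia | lra]. }
  assert (hM : 0 < growth_const a K).
  { unfold growth_const. apply Rmult_lt_0_compat; [apply lt_0_INR; lia|].
    apply pow_lt. assert (0 < 2 / a) by (apply Rdiv_lt_0_compat; lra). lra. }
  exists (est_const a (sin (INR L * s)) (sin (INR (L + 1) * s)) (sin (INR (L + 2) * s))
            (sin (INR (L + 3) * s)) (cos s) (growth_const a K)).
  split; [now apply est_const_pos|].
  intros l hE hN.
  pose proof (normalization_bound a K l ha hE) as hnorm.
  destruct hE as [hrec [l0 _]].
  destruct (solution_identities a s K L l hrel ltac:(lra) hK l0 hrec) as [ID IQ].
  assert (hl1 : 0 <= l 1%nat) by (apply hN; lia).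
  assert (hl2 : 0 <= l 2%nat) by (apply hN; lia).
  assert (hlL1 : 0 <= l (L + 1)%nat) by (apply hN; lia).
  assert (hlL2 : 0 <= l (L + 2)%nat) by (apply hN; lia).
  rewrite (Rabs_right (l 1%nat)), (Rabs_right (l 2%nat)) in hnorm by lra.
  unfold d0. rewrite l0, Rminus_0_l.
  split.
  - exact (d0_lower _ _ _ _ _ _ _ ha hS0 hS1 hS2 hS3 hcs hM
             (l 1%nat) (l (L + 1)%nat) (l (L + 2)%nat) (l 2%nat) hl1 hlL1 hlL2 ID IQ hnorm).
  - exact (q_lower _ _ _ _ _ _ _ ha hS0 hS1 hS2 hS3 hcs hM
             (l 1%nat) (l (L + 1)%nat) (l (L + 2)%nat) (l 2%nat) hl1 hlL1 hlL2 ID IQ hnorm).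
Qed.

Theorem mainTheorem11 (L K : nat) (a : R) (hL : (1 <= L)%nat) (hK : (L <= K)%nat) :
  (in_open L a ->
   exists c : R, 0 < c /\
     forall l : nat -> R, E_sys a K l -> nonneg_seq K l ->
       c <= d0 a l /\
       (l (K + 2)%nat = 0 -> dlast a K l <= - c) /\
       l (L + 2)%nat - a * l (L + 1)%nat < - c) /\
  (in_half_open L a ->
   forall l : nat -> R, E_sys a K l ->
     l (L + 2)%nat - a * l (L + 1)%nat =
       - (sin (INR (L + 2) / 2 * omega a) / sin (INR L / 2 * omega a)) * l 1%nat
       + 2 * a * (cos (omega a / 2) * sin (INR (L + 3) / 2 * omega a)
                  / sin (INR L / 2 * omega a)) * l (L + 1)%nat).
Proof.
  split.
  - (* d_{K+1} of l is -d_0 of the reversed sequence *)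
    intros hopen.
    destruct (uniform_bounds L K a hL hK hopen) as [c [hc hbounds]].
    exists c. split; [exact hc|]. intros l hE hN.
    destruct (hbounds l hE hN) as [hd0 hq].
    split; [exact hd0|split; [|exact hq]]. intros hz.
    destruct (hbounds (reversed K l) (reversed_E_sys a K l hE hz)
                (reversed_nonneg K l hN (proj1 (proj2 hE)))) as [hrev _].
    rewrite reversed_d0 in hrev. lra.
  - (* the identity of part (ii), divided by sin (L s) > 0 *)
    intros [hlow hup] l [hrec [l0 _]].
    destruct (half_angle_lower L a hL hlow) as [ha [hrel [hs h3]]].
    pose proof (proj2 (half_angle_upper L a hL hlow) hup) as h2.
    set (s := omega a / 2) in *.
    destruct (sine_signs L s hL hs h3 h2) as [hS0 [_ [_ [_ hsin2]]]].
    destruct (solution_identities a s K L l hrel ltac:(lra) hK l0 hrec) as [_ IQ].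
    replace (INR (L + 2) / 2 * omega a) with (INR (L + 2) * s) by (unfold s; field).
    replace (INR (L + 3) / 2 * omega a) with (INR (L + 3) * s) by (unfold s; field).
    replace (INR L / 2 * omega a) with (INR L * s) by (unfold s; field).
    apply (Rmult_eq_reg_l (sin (INR L * s))); [|lra].
    rewrite IQ. field. lra.
Qed.
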